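(* Let $\mathcal{F}$ be a finite forest with at least one vertex and without isolated vertices. Then $\mathcal{NC}(\mathcal{F})$ is vertex decomposable if and only if $\mathcal{F}$ is connected and has at most two internal vertices.
   Context: An internal vertex of a forest is a vertex of degree greater than $1$. For a finite simple graph $H$, the non-cover complex $\mathcal{NC}(H)$ is the simplicial complex whose simplices are the subsets $S\subseteq V(H)$ such that $V(H)\setminus S$ contains both endpoints of some edge of $H$. For a simplicial complex $K$ and a vertex $v$, $\mathrm{lk}(v,K)=\{\tau\in K: v\notin\tau,\ \tau\cup\{v\}\in K\}$ and $\mathrm{del}(v,K)=\{\tau\in K: v\notin\tau\}$. A simplicial complex $K$ is vertex decomposable if $K$ is a simplex (the set of all subsets of a finite set, including $\{\emptyset\}$), or $K$ contains a vertex $v$ such that (i) both $\mathrm{lk}(v,K)$ and $\mathrm{del}(v,K)$ are vertex decomposable, and (ii) every facet (maximal simplex) of $\mathrm{del}(v,K)$ is a facet of $K$. *)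

From mathcomp Require Import all_boot.
Set Implicit Arguments. Unset Strict Implicit. Unset Printing Implicit Defensive.

Definition simple_graph (T : finType) (e : rel T) : Prop :=
  symmetric e /\ irreflexive e.

Definition nbhd (T : finType) (e : rel T) (v : T) : {set T} := [set w | e v w].
Definition degree (T : finType) (e : rel T) (v : T) : nat := #|nbhd e v|.

Definition is_forest (T : finType) (e : rel T) : Prop :=
  forall p : seq T, uniq p -> 3 <= size p -> ~~ cycle e p.

Definition connected_graph (T : finType) (e : rel T) : Prop :=
  forall x y : T, connect e x y.

Definition no_isolated (T : finType) (e : rel T) : Prop :=
  forall v : T, 0 < degree e v.

Definition internal_vertices (T : finType) (e : rel T) : {set T} :=
  [set v | 1 < degree e v].

(* Simplicial complexes represented by their set of faces. *)
Definition complex (T : finType) := {set {set T}}.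

Definition non_cover_complex (T : finType) (e : rel T) : complex T :=
  [set S : {set T} | [exists x, exists y, [&& e x y, x \notin S & y \notin S]]].

Definition link (T : finType) (v : T) (K : complex T) : complex T :=
  [set tau in K | (v \notin tau) && (v |: tau \in K)].

Definition deletion (T : finType) (v : T) (K : complex T) : complex T :=
  [set tau in K | v \notin tau].

Definition is_simplex (T : finType) (K : complex T) : Prop :=
  exists A : {set T}, K = powerset A.

Definition is_facet (T : finType) (K : complex T) (F : {set T}) : bool :=
  (F \in K) && [forall G in K, (F \subset G) ==> (G == F)].

Inductive vertex_decomposable (T : finType) : complex T -> Prop :=
  | vd_simplex (K : complex T) : is_simplex K -> vertex_decomposable K
  | vd_shed (K : complex T) (v : T) :
      [set v] \in K ->
      vertex_decomposable (link v K) ->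
      vertex_decomposable (deletion v K) ->
      (forall F, is_facet (deletion v K) F -> is_facet K F) ->
      vertex_decomposable K.

From mathcomp Require Import all_boot.
Set Implicit Arguments. Unset Strict Implicit. Unset Printing Implicit Defensive.

(* Necessity.  For a down-closed complex [K] and a vertex set [s], let
   [face_link s K] be the link of [s].  By induction on vertex
   decomposability, every link of a vertex decomposable complex is facet
   connected: any two facets are joined by a chain of facets, consecutive ones
   differing in at most one vertex on one side.  For NC(e) the facets of the
   link of [s] are the complements of the edges of [e] minus [s], and adjacent
   facets come from edges sharing a vertex; so all edges of [e] minus [s] lie
   in one component.  With [s] empty this gives connectivity; with [s] a
   vertex [x] it forbids [x] to have two internal neighbours in a forest.
   The internal vertices thus span a connected graph of maximum degree one,
   hence number at most two.

   Sufficiency.  Such a graph is a star or a double star.  The non-cover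
   complex of a star is a join of a simplex with the boundary of a simplex,
   which is vertex decomposable; for a double star one centre is a shedding
   vertex whose link and deletion are complexes of the same kind. *)

Lemma connect_ind (T : finType) (r : rel T) (P : T -> Prop) :
  (forall x y, r x y -> P x -> P y) -> forall x y, connect r x y -> P x -> P y.
Proof.
move=> Pr x y /connectP [p + ->]; elim: p x => [|z p IH] x //= /andP [rxz pz] Px.
exact: IH pz (Pr _ _ rxz Px).
Qed.

Lemma subsetC1 (T : finType) (S : {set T}) c :
  (S \subset ~: [set c]) = (c \notin S).
Proof. by rewrite -disjoints_subset disjoint_sym disjoints1. Qed.

Lemma card_le2_pair (T : finType) (A : {set T}) c d :
  c \in A -> d \in A -> c != d -> #|A| <= 2 -> A = [set c; d].
Proof.
move=> cA dA cd cA2; apply/eqP; rewrite eq_sym eqEcard cards2 cd cA2 andbT.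
by apply/subsetP => z /set2P [] ->.
Qed.

(* A connected vertex set in a graph of maximum degree at most one has at most
   two vertices: a point together with its neighbour, if any, is closed. *)
Lemma card_le2_of_deg_le1 (T : finType) (f : rel T) (A : {set T}) :
  symmetric f -> (forall x y z, f x y -> f x z -> y = z) ->
  (forall a b, a \in A -> b \in A -> connect f a b) -> #|A| <= 2.
Proof.
move=> sym deg1 conn; have [->|[a aA]] := set_0Vmem A; first by rewrite cards0.
have [b closed] : exists b,
    forall x y, f x y -> x \in [set a; b] -> y \in [set a; b].
  case: (pickP (f a)) => [b fab | nofa].
    exists b => x y fxy /set2P [] Ex; apply/set2P; rewrite Ex in fxy.
    - by right; apply: deg1 fxy fab.
    - by left; apply: deg1 fxy _; rewrite sym.
  by exists a => x y fxy /set2P [] Ex; move: (nofa y); rewrite -Ex fxy.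
apply: leq_trans (_ : #|[set a; b]| <= 2); last by rewrite cards2; case: (a != b).
apply/subset_leq_card/subsetP => c cA.
exact: (connect_ind (P := fun y => y \in [set a; b]) closed (conn a c aA cA)
  (set21 a b)).
Qed.

Section Graphs.
Variables (T : finType) (e : rel T).
Implicit Types (s : {set T}) (a b c d u w x y z : T).
Local Notation I := (internal_vertices e).

Definition gdel s : rel T := [rel x y | [&& e x y, x \notin s & y \notin s]].

Lemma gdel_sym s : symmetric e -> symmetric (gdel s).
Proof.
by move=> sym x y; rewrite /gdel /= sym; congr (_ && _); apply: andbC.
Qed.

Lemma nbhd_sub_compl c : irreflexive e -> nbhd e c \subset ~: [set c].
Proof. by move=> irr; rewrite subsetC1 inE irr. Qed.

Lemma neighbour_exists x : 0 < degree e x -> exists y, e x y.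
Proof. by case/card_gt0P => y; rewrite inE; exists y. Qed.

Lemma internal_of_two_nb z a b : e z a -> e z b -> a != b -> z \in I.
Proof.
by move=> za zb ab; rewrite inE; apply/card_gt1P; exists a, b; rewrite !inE za zb.
Qed.

Lemma internal_other_nb y x : y \in I -> exists2 z, e y z & z != x.
Proof.
rewrite inE => /card_gt1P [a [b [aN bN ab]]]; rewrite !inE in aN bN.
by case: (eqVneq a x) => [ax|]; [exists b; rewrite // -ax eq_sym | exists a].
Qed.

Lemma leaf_nb_unique x y w : x \notin I -> e x y -> e x w -> w = y.
Proof.
rewrite inE -leqNgt => deg1 exy exw; apply/eqP/negPn/negP => wy.
have : #|[set w; y]| <= 1.
  apply/(leq_trans _ deg1)/subset_leq_card/subsetP => z.
  by case/set2P => ->; rewrite inE.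
by rewrite cards2 wy.
Qed.

Definition internal_rel : rel T := [rel x y | [&& e x y, x \in I & y \in I]].

Lemma internal_rel_sym : symmetric e -> symmetric internal_rel.
Proof.
by move=> sym x y; rewrite /internal_rel /= sym; congr (_ && _); apply: andbC.
Qed.

(* On a simple path, every vertex strictly between two internal ends has two
   distinct neighbours, so the whole path runs through internal vertices. *)
Lemma internal_path a p : symmetric e -> uniq (a :: p) -> path e a p ->
  a \in I -> last a p \in I -> path internal_rel a p.
Proof.
move=> sym; elim: p a => [|y p IH] a //= /andP [ap up] /andP [eay pth] aI lI.
have yI : y \in I.
  case: p {IH up} pth lI ap => [|z p] //= /andP [eyz _] _ ap.
  apply: (internal_of_two_nb (a := a) _ eyz); first by rewrite sym.
  by apply: contraNneq ap => ->; rewrite !inE eqxx orbT.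
by rewrite /internal_rel /= eay aI yI IH.
Qed.

Lemma internal_connect a b : symmetric e -> connect e a b ->
  a \in I -> b \in I -> connect internal_rel a b.
Proof.
move=> sym /connectP [p pth ->] aI lI; case: (shortenP pth) lI => q qpth uq _ lI.
by apply/connectP; exists q => //; apply: internal_path.
Qed.

Lemma gdel_path_avoid s a p : path (gdel s) a p -> {in p, forall z, z \notin s}.
Proof.
elim: p a => [|y p IH] a //= /andP [/and3P [_ _ ys] pth] z.
by rewrite inE => /orP [/eqP -> // | /(IH _ pth)].
Qed.

(* In a forest, two neighbours of [x] cannot be joined by a path avoiding [x]:
   together with [x] such a path would close a cycle. *)
Lemma forest_no_detour x y1 y2 : simple_graph e -> is_forest e ->
  e x y1 -> e x y2 -> y1 != y2 -> ~~ connect (gdel [set x]) y1 y2.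
Proof.
move=> [sym irr] forest e1 e2 y12; apply/negP => /connectP [p pth E].
case: (shortenP pth) E => q qpth uq _ E.
have q0 : q != [::] by apply: contra_neq y12 => q0; rewrite E q0.
have ux : uniq (x :: y1 :: q).
  rewrite cons_uniq uq andbT inE negb_or; apply/andP; split.
    by apply: contraTneq e1 => ->; rewrite irr.
  by apply/negP => /(gdel_path_avoid qpth); rewrite inE eqxx.
have cyc : cycle e (x :: y1 :: q).
  rewrite /= e1 rcons_path -E sym e2 andbT.
  by apply: sub_path qpth => a b /and3P [].
have size3 : 3 <= size (x :: y1 :: q) by case: q q0 {qpth uq E ux cyc}.
by move: (forest _ ux size3); rewrite cyc.
Qed.

Lemma leaf_edge_spans x y : symmetric e -> connected_graph e ->
  e x y -> x \notin I -> y \notin I -> forall z, z \in [set x; y].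
Proof.
move=> sym conn exy xI yI z.
apply: (connect_ind (P := fun z => z \in [set x; y])) (conn x z) (set21 x y).
move=> a b eab /set2P [] Ea; apply/set2P; rewrite Ea in eab.
  by right; apply: leaf_nb_unique xI exy eab.
by left; apply: leaf_nb_unique yI _ eab; rewrite sym.
Qed.

(* Two internal vertices of a connected graph with no other internal vertex
   are adjacent: a shortest path between them runs through internal
   vertices. *)
Lemma internal_pair_adjacent c d : simple_graph e -> connected_graph e ->
  I = [set c; d] -> c != d -> e c d.
Proof.
move=> [sym irr] conn Icd cd.
have cI : c \in I by rewrite Icd set21.
have dI : d \in I by rewrite Icd set22.
case/connectP: (internal_connect sym (conn c d) cI dI) => [[|q p]] /=.
  by move=> _ dc; move: cd; rewrite dc eqxx.
case/andP => /and3P [ecq _ qI] _ _; move: qI; rewrite Icd => /set2P [] Eq.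
  by move: ecq; rewrite Eq irr.
by rewrite -Eq.
Qed.
End Graphs.

Section Complexes.
Variable T : finType.
Implicit Types (K : complex T) (s A B F G Y : {set T}) (v y : T).

Definition down_closed K := forall F G, F \in K -> G \subset F -> G \in K.

(* The link of an arbitrary vertex set [s]: the sets [A] disjoint from [s]
   with [A :|: s] a face; for down-closed [K], [link v K] is the link of
   [[set v]]. *)
Definition face_link s K : complex T :=
  [set A : {set T} | (A \subset ~: s) && (A :|: s \in K)].

Lemma setUDK_disjoint A s : A \subset ~: s -> (A :|: s) :\: s = A.
Proof. by rewrite setDUl setDv setU0 -disjoints_subset => /setDidPl. Qed.

Lemma setDUK_sub s G : s \subset G -> (G :\: s) :|: s = G.
Proof.
move=> /subsetP sG; apply/setP => x; rewrite !inE.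
by case: (boolP (x \in s)) => [/sG ->|]; rewrite ?orbT ?andbT ?orbF.
Qed.

Lemma facetP K F :
  reflect (F \in K /\ forall G, G \in K -> F \subset G -> G = F) (is_facet K F).
Proof.
apply: (iffP andP) => [[FK /forall_inP maxF]|[FK maxF]]; split => //.
- by move=> G GK FG; apply/eqP; move: (maxF G GK); rewrite FG.
- by apply/forall_inP => G GK; apply/implyP => FG; rewrite (maxF G GK FG).
Qed.

(* Every face lies in a facet: take a face of maximal size above it. *)
Lemma facet_exists K F : F \in K -> exists2 G, is_facet K G & F \subset G.
Proof.
move=> FK; pose P := [pred G | (G \in K) && (F \subset G)].
have PF : P F by rewrite /= FK subxx.
case: (arg_maxnP (fun G => #|G|) PF) => G /andP [GK FG] maxG.
exists G => //; apply/facetP; split => // H HK GH.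
apply/eqP; rewrite eq_sym eqEcard GH /=; apply: maxG.
by rewrite /= HK (subset_trans FG GH).
Qed.

Lemma powerset_facet A F : is_facet (powerset A) F -> F = A.
Proof.
by case/facetP; rewrite powersetE => FA maxF; apply/esym/maxF; rewrite ?powersetE.
Qed.

Lemma deletion_facet K v F :
  v \notin F -> is_facet K F -> is_facet (deletion v K) F.
Proof.
move=> vF /facetP [FK maxF]; apply/facetP; split; first by rewrite inE FK.
by move=> G; rewrite inE => /andP [GK _]; apply: maxF.
Qed.

Lemma face_link_facet K s A :
  is_facet (face_link s K) A = (A \subset ~: s) && is_facet K (A :|: s).
Proof.
apply/idP/andP => [/facetP [] | [As /facetP [AsK maxAs]]].
  rewrite inE => /andP [As AsK] maxA; split => //.
  apply/facetP; split => // G GK AsG.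
  have sG : s \subset G by apply: subset_trans AsG; apply: subsetUr.
  rewrite -(setDUK_sub sG) (maxA (G :\: s)) // ?inE ?subsetDr ?setDUK_sub //.
  by rewrite subsetD (subset_trans (subsetUl A s) AsG) disjoints_subset.
apply/facetP; split => [|B]; first by rewrite inE As AsK.
rewrite inE => /andP [Bs BsK] AB.
by rewrite -(setUDK_disjoint Bs) (maxAs _ BsK (setSU _ AB)) setUDK_disjoint.
Qed.

Lemma down_closed_link K v : down_closed K -> down_closed (link v K).
Proof.
move=> dK F G; rewrite !inE => /and3P [FK vF vFK] GF.
rewrite (dK _ _ FK GF) (dK _ _ vFK (setUS _ GF)) andbT /=.
by apply: contra vF; apply/subsetP.
Qed.

Lemma down_closed_deletion K v : down_closed K -> down_closed (deletion v K).
Proof.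
move=> dK F G; rewrite !inE => /andP [FK vF] GF.
by rewrite (dK _ _ FK GF) /=; apply: contra vF; apply/subsetP.
Qed.

Lemma face_link_link K s v :
  down_closed K -> v \in s -> face_link s K = face_link (s :\ v) (link v K).
Proof.
move=> dK vs; apply/setP => A; rewrite !inE.
have -> : v |: (A :|: s :\ v) = A :|: s.
  by apply/setP => x; rewrite !inE; case: (eqVneq x v) => // ->; rewrite vs orbT.
case AsK: (A :|: s \in K); rewrite ?andbF ?andbT //= eqxx /= orbF.
apply/idP/and3P => [/subsetP As | [/subsetP As _ vA]].
  have vA : v \notin A by apply/negP => /As; rewrite inE vs.
  split => //.
  - by apply/subsetP => x /As; rewrite !inE => /negbTE ->; rewrite andbF.
  - by apply: dK AsK _; apply: setUS; apply: subsetDl.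
apply/subsetP => x xA; move: (As x xA); rewrite !inE negb_and negbK.
by case/orP => // /eqP xv; move: vA; rewrite -xv xA.
Qed.

Definition facet_adj K : rel {set T} := fun F G =>
  [&& is_facet K F, is_facet K G & (#|F :\: G| <= 1) || (#|G :\: F| <= 1)].

Definition facet_connected K :=
  forall F G, is_facet K F -> is_facet K G -> connect (facet_adj K) F G.

Lemma facet_adj_sym K : symmetric (facet_adj K).
Proof. by move=> F G; rewrite /facet_adj andbCA orbC. Qed.

Section Shedding.
Variables (K : complex T) (v : T).
Hypothesis shed : forall F, is_facet (deletion v K) F -> is_facet K F.

Lemma shedding_link_facet s A :
  is_facet (face_link s (deletion v K)) A -> is_facet (face_link s K) A.
Proof. by rewrite !face_link_facet => /andP [-> /shed]. Qed.

Lemma shedding_link_adj s A :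
  down_closed K -> v \notin s -> is_facet (face_link s K) A ->
  exists2 B, is_facet (face_link s (deletion v K)) B
           & connect (facet_adj (face_link s K)) A B.
Proof.
move=> dK vs AF; rewrite face_link_facet in AF.
have /andP [As AsF] := AF; have /facetP [AsK _] := AsF.
case: (boolP (v \in A)) => vA; last first.
  exists A => //.
  by rewrite face_link_facet As deletion_facet // inE negb_or vA.
have AsvD : (A :|: s) :\ v \in deletion v K.
  by rewrite !inE eqxx (dK _ _ AsK (subsetDl _ _)).
have [G GF AsG] := facet_exists AsvD.
have sG : s \subset G by apply: subset_trans AsG; rewrite subsetD1 subsetUr.
have BF : is_facet (face_link s (deletion v K)) (G :\: s).
  by rewrite face_link_facet subsetDr setDUK_sub.
exists (G :\: s) => //; apply: connect1.
rewrite /facet_adj face_link_facet AF (shedding_link_facet BF) /=.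
suff : A :\: (G :\: s) \subset [set v].
  by move/subset_leq_card; rewrite cards1 => ->.
apply/subsetP => x; rewrite !inE negb_and negbK => /andP [xsG xA].
have xs : x \notin s by move/subsetP: As => /(_ x xA); rewrite inE.
apply/negPn/negP => xv; move: xsG; rewrite (negbTE xs) /=; apply/negP/negPn.
by move/subsetP: AsG; apply; rewrite !inE xA xv.
Qed.
End Shedding.

(* Vertex decomposability forces every link to be facet connected (the
   non-pure analogue of the strong connectivity of shellable complexes). *)
Theorem vd_face_link_connected K :
  vertex_decomposable K -> down_closed K ->
  forall s, facet_connected (face_link s K).
Proof.
elim=> {K} [K [A ->] | K v _ _ IHlink _ IHdel shed] dK s.
  have uniq_facet F : is_facet (face_link s (powerset A)) F -> F = A :\: s.
    rewrite face_link_facet => /andP [Fs /powerset_facet <-].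
    by rewrite setUDK_disjoint.
  by move=> F G /uniq_facet -> /uniq_facet ->.
case: (boolP (v \in s)) => vs.
  by rewrite (face_link_link dK vs); apply/IHlink/down_closed_link.
move=> A B AF BF.
have [A' A'F AA'] := shedding_link_adj shed dK vs AF.
have [B' B'F BB'] := shedding_link_adj shed dK vs BF.
rewrite (sym_connect_sym (facet_adj_sym _)) in BB'.
apply: connect_trans AA' (connect_trans _ BB').
have := IHdel (@down_closed_deletion _ v dK) s _ _ A'F B'F.
apply: connect_sub => F G.
by case/and3P => /(shedding_link_facet shed) FF /(shedding_link_facet shed) GF c;
  apply: connect1; rewrite /facet_adj FF GF.
Qed.

(* The subsets of [G] not containing all of [Y]; for [Y \subset G] this is the
   join of the simplex on [G :\: Y] with the boundary of the simplex on [Y]. *)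
Definition boundary_join G Y : complex T :=
  [set S : {set T} | (S \subset G) && ~~ (Y \subset S)].

Lemma boundary_join_facet G Y y :
  y \in Y -> Y \subset G -> is_facet (boundary_join G Y) (G :\ y).
Proof.
move=> yY YG; have nYGy : ~~ (Y \subset G :\ y).
  by apply/negP => /subsetP /(_ y yY); rewrite !inE eqxx.
apply/facetP; split => [|S]; first by rewrite inE subsetDl.
rewrite inE => /andP [SG nYS] GyS; apply/eqP.
rewrite eq_sym eqEsubset GyS subsetD1 SG /=.
apply: contra nYS => yS; apply: (subset_trans YG).
by rewrite -(setD1K (subsetP YG y yY)) subUset sub1set yS.
Qed.

Lemma boundary_join_facetP G Y F :
  is_facet (boundary_join G Y) F -> exists2 y, y \in Y & F = G :\ y.
Proof.
case/facetP => FJ maxF; move: (FJ); rewrite inE => /andP [FG /subsetPn [y yY yF]].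
exists y => //; apply/esym/maxF; last by rewrite subsetD1 FG yF.
by rewrite inE subsetDl; apply/negP => /subsetP /(_ y yY); rewrite !inE eqxx.
Qed.

Lemma deletion_boundary_join G Y y :
  y \notin Y -> deletion y (boundary_join G Y) = boundary_join (G :\ y) Y.
Proof. by move=> yY; apply/setP => S; rewrite !inE subsetD1 andbAC. Qed.

(* Shedding a vertex [y] of [Y] leaves a smaller boundary join as link and the
   simplex on [G :\ y] as deletion; when [Y = [set y]] the complex is that
   simplex itself. *)
Lemma boundary_join_vd G Y :
  Y != set0 -> Y \subset G -> vertex_decomposable (boundary_join G Y).
Proof.
have [n] := ubnP #|Y|; elim: n G Y => // n IH G Y /ltnSE cY /set0Pn [y yY] YG.
have yG : y \in G := subsetP YG y yY.
have del : deletion y (boundary_join G Y) = powerset (G :\ y).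
  apply/setP => S; rewrite !inE subsetD1 -andbA; congr (_ && _).
  by apply/andb_idl; apply: contra => /subsetP; apply.
have [Yy | nYy] := eqVneq (Y :\ y) set0.
  apply: vd_simplex; exists (G :\ y); rewrite -del; apply/setP => S; rewrite !inE.
  by rewrite -(setD1K yY) Yy setU0 sub1set -andbA andbb.
apply: (@vd_shed _ _ y).
- by rewrite inE sub1set yG -setD_eq0 nYy.
- have -> : link y (boundary_join G Y) = boundary_join (G :\ y) (Y :\ y).
    apply/setP => S; rewrite !inE subsetD1 subDset subUset sub1set yG /=.
    case: (S \subset G) (y \in S) => [] [] //=; rewrite ?andbF //.
    apply/andb_idl => /negP nYyS.
    by apply/negP => YS; apply: nYyS; apply: subset_trans YS (subsetUr _ _).
  apply: IH nYy (setSD _ YG).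
  by apply: leq_trans cY; rewrite (cardsD1 y Y) yY.
- by rewrite del; apply: vd_simplex; exists (G :\ y).
- by rewrite del => F /powerset_facet ->; apply: boundary_join_facet.
Qed.
End Complexes.

Section NonCoverComplex.
Variables (T : finType) (e : rel T).
Implicit Types (s F : {set T}) (c u w x y : T).
Local Notation NC := (non_cover_complex e).

Lemma ncP F :
  reflect (exists x y, [/\ e x y, x \notin F & y \notin F]) (F \in NC).
Proof.
rewrite inE; apply: (iffP existsP).
  by case=> x /existsP [y /and3P [exy xF yF]]; exists x, y.
by case=> x [y [exy xF yF]]; exists x; apply/existsP; exists y; rewrite exy xF yF.
Qed.

Lemma nc_down_closed : down_closed NC.
Proof.
move=> F G /ncP [x [y [exy xF yF]]] /subsetP GF; apply/ncP; exists x, y.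
by split => //; [apply: contra xF | apply: contra yF]; apply: GF.
Qed.

Lemma compl_pair_sub F x y : x \notin F -> y \notin F -> F \subset ~: [set x; y].
Proof.
by move=> xF yF; apply/subsetP => z zF; rewrite !inE; apply/norP;
  split; apply: contraTneq zF => ->.
Qed.

Lemma nc_edge_facet u w : irreflexive e -> e u w -> is_facet NC (~: [set u; w]).
Proof.
move=> irr euw; apply/facetP; split.
  by apply/ncP; exists u, w; rewrite !inE !eqxx ?orbT.
move=> G /ncP [x [y [exy xG yG]]] sub.
have xy : x != y by apply: contraTneq exy => ->; rewrite irr.
have in_uw z : z \notin G -> z \in [set u; w].
  by move=> zG; apply: contraR zG => zuw; apply: (subsetP sub); rewrite inE.
have uwxy : [set u; w] = [set x; y].
  by apply: card_le2_pair; rewrite ?in_uw // cards2; case: (u != w).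
by apply/eqP; rewrite eqEsubset sub uwxy compl_pair_sub.
Qed.

Lemma nc_facet_edge F : is_facet NC F -> exists u w, e u w /\ F = ~: [set u; w].
Proof.
case/facetP => FK maxF; have [x [y [exy xF yF]]] := ncP _ FK.
exists x, y; split => //; apply/esym/maxF; last exact: compl_pair_sub.
by apply/ncP; exists x, y; rewrite !inE !eqxx ?orbT.
Qed.

Lemma nc_link_facet s u w :
  irreflexive e -> gdel e s u w -> is_facet (face_link s NC) (~: [set u; w] :\: s).
Proof.
move=> irr /and3P [euw us ws].
by rewrite face_link_facet subsetDr setDUK_sub ?compl_pair_sub ?nc_edge_facet.
Qed.

Lemma nc_link_facet_edge s F : is_facet (face_link s NC) F ->
  exists u w, gdel e s u w /\ F = ~: [set u; w] :\: s.
Proof.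
rewrite face_link_facet => /andP [Fs /nc_facet_edge [u [w [euw FsE]]]].
have out z : z \in [set u; w] -> z \notin s.
  by move=> zuw; apply: contraL zuw => zs; rewrite -in_setC -FsE inE zs orbT.
exists u, w; split; last by rewrite -FsE setUDK_disjoint.
by rewrite /gdel /= euw !out // !inE eqxx ?orbT.
Qed.

(* Two adjacent facets of a link come from edges sharing a vertex: otherwise
   each facet contains both ends of the other edge. *)
Lemma nc_link_adj_share s u w u' w' : irreflexive e ->
  gdel e s u w -> gdel e s u' w' ->
  facet_adj (face_link s NC) (~: [set u; w] :\: s) (~: [set u'; w'] :\: s) ->
  [|| u' == u, u' == w, w' == u | w' == w].
Proof.
move=> irr huw huw' /and3P [_ _ small]; apply/negPn/negP.
have diff a b a' b' : gdel e s a' b' -> a' \notin [set a; b] ->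
    b' \notin [set a; b] ->
    1 < #|(~: [set a; b] :\: s) :\: (~: [set a'; b'] :\: s)|.
  move=> /and3P [eab' as' bs']; rewrite !inE !negb_or => a'ab b'ab.
  have a'b' : a' != b' by apply: contraTneq eab' => ->; rewrite irr.
  apply: leq_trans (_ : 2 <= #|[set a'; b']|) _; first by rewrite cards2 a'b'.
  apply: subset_leq_card; apply/subsetP => z.
  by rewrite !inE => /orP [] /eqP ->;
    rewrite !eqxx ?orbT andbF /= ?as' ?bs' negb_or.
rewrite !negb_or => /and4P [u'u u'w w'u w'w].
case/orP: small; apply/negP; rewrite -ltnNge.
  by apply: diff huw' _ _; rewrite !inE !negb_or ?u'u ?u'w ?w'u ?w'w.
by apply: diff huw _ _; rewrite !inE !negb_or ?[u == _]eq_sym ?[w == _]eq_sym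
  ?u'u ?u'w ?w'u ?w'w.
Qed.

(* If the link of [s] is facet connected, all edges of the graph with [s]
   deleted lie in one component: reachability of an edge from [u1] is
   propagated along adjacent facets. *)
Lemma nc_link_edges_connected s u1 w1 u2 w2 :
  simple_graph e -> facet_connected (face_link s NC) ->
  gdel e s u1 w1 -> gdel e s u2 w2 -> connect (gdel e s) u1 u2.
Proof.
move=> [sym irr] conn h1 h2.
pose reach F := exists u w,
  [/\ gdel e s u w, F = ~: [set u; w] :\: s & connect (gdel e s) u1 u].
have step F G : facet_adj (face_link s NC) F G -> reach F -> reach G.
  move=> adj [u [w [huw EF cu]]]; have /and3P [_ GF _] := adj.
  have [u' [w' [huw' EG]]] := nc_link_facet_edge GF.
  have cw : connect (gdel e s) u1 w by apply: connect_trans cu (connect1 huw).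
  have hw'u' : gdel e s w' u' by rewrite gdel_sym.
  move: adj; rewrite EF EG => /(nc_link_adj_share irr huw huw') /or4P [] /eqP E.
  - by exists u', w'; split; rewrite // E.
  - by exists u', w'; split; rewrite // E.
  - by exists w', u'; split; [| rewrite setUC | rewrite E].
  - by exists w', u'; split; [| rewrite setUC | rewrite E].
have [|u [w [huw E cu]]] := connect_ind step
  (conn _ _ (nc_link_facet irr h1) (nc_link_facet irr h2)).
  by exists u1, w1; split.
have /and3P [_ u2s _] := h2.
have : u2 \notin ~: [set u; w] :\: s by rewrite -E !inE eqxx /= andbF.
rewrite !inE negb_and !negbK (negbTE u2s) /= => /orP [] /eqP -> //.
exact: connect_trans cu (connect1 huw).
Qed.

Lemma nc_deletion_dominating c : symmetric e ->
  (forall x y, e x y -> [|| x == c, y == c, e c x | e c y]) ->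
  deletion c NC = boundary_join (~: [set c]) (nbhd e c).
Proof.
move=> sym dom; apply/setP => S; rewrite [in LHS]inE [in RHS]inE.
rewrite subsetC1 andbC; case: (boolP (c \in S)) => //= cS.
apply/ncP/subsetPn => [[x [y [exy xS yS]]] | [w cw wS]].
  case/or4P: (dom _ _ exy) => [/eqP xc | /eqP yc | cx | cy].
  - by exists y; rewrite // inE -xc.
  - by exists x; rewrite // inE sym -yc.
  - by exists x; rewrite ?inE.
  - by exists y; rewrite ?inE.
by exists c, w; rewrite inE in cw.
Qed.

(* A star: when every edge contains [c], no face contains [c]. *)
Lemma nc_star c : simple_graph e ->
  (forall x y, e x y -> (x == c) || (y == c)) ->
  NC = boundary_join (~: [set c]) (nbhd e c).
Proof.
move=> [sym irr] star; rewrite -nc_deletion_dominating //; last first.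
  by move=> x y /star /orP [] ->; rewrite ?orbT.
apply/setP => S; rewrite [in RHS]inE; apply/esym/andb_idr.
by case/ncP => x [y [exy xS yS]]; case/orP: (star _ _ exy) => /eqP <-.
Qed.

Lemma nc_star_vd c : simple_graph e ->
  (forall x y, e x y -> (x == c) || (y == c)) ->
  0 < degree e c -> vertex_decomposable NC.
Proof.
move=> sg star degc; rewrite (nc_star sg star).
by apply: boundary_join_vd; [rewrite -card_gt0 | apply: nbhd_sub_compl; case: sg].
Qed.
End NonCoverComplex.

Lemma nc_link (T : finType) (e : rel T) v :
  link v (non_cover_complex e) =
  deletion v (non_cover_complex (gdel e [set v])).
Proof.
apply/setP => S; rewrite [in LHS]inE [in RHS]inE.
case: (boolP (v \in S)) => vS; rewrite ?andbF ?andbT //=.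
apply/andP/ncP => [[_ /ncP [x [y [exy]]]] | [x [y [/and3P [exy xv yv] xS yS]]]].
  by rewrite !inE !negb_or => /andP [xv xS] /andP [yv yS]; exists x, y;
    rewrite /gdel /= exy !inE xv yv.
split; apply/ncP; exists x, y; split => //.
  by rewrite !inE negb_or -in_set1 xv.
by rewrite !inE negb_or -in_set1 yv.
Qed.

(* A double star: an edge [ab] meets every edge and [b] is internal.  Then [a]
   is a shedding vertex: its deletion is a boundary join by domination, and
   its link is a boundary join because deleting [a] leaves a star at [b]. *)
Lemma nc_double_star_vd (T : finType) (e : rel T) a b :
  simple_graph e -> e a b ->
  (forall x y, e x y -> [|| x == a, x == b, y == a | y == b]) ->
  b \in internal_vertices e -> vertex_decomposable (non_cover_complex e).
Proof.
move=> sg eab dstar bI; have [sym irr] := sg.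
have [w bw wa] := internal_other_nb a bI.
have ab : a != b by apply: contraTneq eab => ->; rewrite irr.
have del : deletion a (non_cover_complex e) =
           boundary_join (~: [set a]) (nbhd e a).
  apply: nc_deletion_dominating => // x y /dstar /or4P [] /eqP ->;
    by rewrite ?eqxx ?eab ?orbT.
pose g := gdel e [set a].
have gsg : simple_graph g.
  by split; [apply: gdel_sym | move=> x; rewrite /g /gdel /= irr].
have gstar x y : g x y -> (x == b) || (y == b).
  by case/and3P => /dstar; rewrite !inE => /or4P [] /eqP ->; rewrite ?eqxx ?orbT.
have lnk : link a (non_cover_complex e) =
           boundary_join (~: [set b] :\ a) (nbhd g b).
  rewrite nc_link (nc_star gsg gstar) deletion_boundary_join //.
  by rewrite inE /g /gdel /= !inE eqxx !andbF.
apply: (@vd_shed _ _ a).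
- by apply/ncP; exists b, w; rewrite !inE eq_sym ab.
- rewrite lnk; apply: boundary_join_vd.
    by apply/set0Pn; exists w; rewrite inE /g /gdel /= bw !inE wa eq_sym ab.
  apply/subsetP => x; rewrite inE => /and3P [bx _]; rewrite !inE => -> /=.
  by apply: contraTneq bx => ->; rewrite irr.
- rewrite del; apply: boundary_join_vd; last exact: nbhd_sub_compl.
  by apply/set0Pn; exists b; rewrite inE.
- rewrite del => F /boundary_join_facetP [y ay ->].
  have -> : ~: [set a] :\ y = ~: [set a; y].
    by apply/setP => z; rewrite !inE negb_or andbC.
  by apply: nc_edge_facet; rewrite // inE in ay.
Qed.

(* Necessity: facet connectivity of the link of the empty face makes the graph
   connected, and that of the link of a vertex [x] forbids two internal
   neighbours of [x] in a forest; the internal vertices then span a connected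
   graph of maximum degree one. *)
Lemma nc_vd_necessary (T : finType) (e : rel T) :
  simple_graph e -> is_forest e -> no_isolated e ->
  vertex_decomposable (non_cover_complex e) ->
  connected_graph e /\ #|internal_vertices e| <= 2.
Proof.
move=> sg forest noiso vd; have [sym irr] := sg.
have link_conn s := vd_face_link_connected vd (@nc_down_closed _ e) s.
have conn : connected_graph e.
  move=> x y; have [x' exx'] := neighbour_exists (noiso x).
  have [y' eyy'] := neighbour_exists (noiso y).
  have gdel0 a b : e a b -> gdel e set0 a b by rewrite /gdel /= !inE => ->.
  have := nc_link_edges_connected sg (link_conn set0)
    (gdel0 _ _ exx') (gdel0 _ _ eyy').
  by apply: connect_sub => a b /and3P [eab _ _]; apply: connect1.
split => //.
have deg1 x y1 y2 : internal_rel e x y1 -> internal_rel e x y2 -> y1 = y2.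
  move=> /and3P [e1 _ y1I] /and3P [e2 _ y2I]; apply/eqP/negPn/negP => y12.
  have [z1 ez1 z1x] := internal_other_nb x y1I.
  have [z2 ez2 z2x] := internal_other_nb x y2I.
  have off a z : e x a -> e a z -> z != x -> gdel e [set x] a z.
    move=> exa eaz zx; rewrite /gdel /= eaz !inE zx andbT.
    by apply: contraTneq exa => ->; rewrite irr.
  move/negP: (forest_no_detour sg forest e1 e2 y12); apply.
  exact: nc_link_edges_connected sg (link_conn [set x])
    (off _ _ e1 ez1 z1x) (off _ _ e2 ez2 z2x).
apply: card_le2_of_deg_le1 (internal_rel_sym sym) deg1 _ => a b aI bI.
exact: internal_connect sym (conn a b) aI bI.
Qed.

(* Sufficiency: a connected graph without isolated vertices and with at most
   two internal vertices is a star (at most one internal vertex, or a single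
   edge) or a double star (two adjacent internal vertices). *)
Lemma nc_vd_sufficient (T : finType) (e : rel T) :
  simple_graph e -> 0 < #|T| -> no_isolated e -> connected_graph e ->
  #|internal_vertices e| <= 2 -> vertex_decomposable (non_cover_complex e).
Proof.
move=> sg T0 noiso conn cI; have [sym irr] := sg.
have [I0 | [c cI']] := set_0Vmem (internal_vertices e).
  have [x _] := card_gt0P T0; have [y exy] := neighbour_exists (noiso x).
  have leaf z : z \notin internal_vertices e by rewrite I0 inE.
  have span := leaf_edge_spans sym conn exy (leaf x) (leaf y).
  apply: (@nc_star_vd _ _ x) => // u w euw.
  have [-> | Eu] := set2P (span u); first by rewrite eqxx.
  have [-> | Ew] := set2P (span w); first by rewrite eqxx orbT.
  by move: euw; rewrite Eu Ew irr.
have meetI x y :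
    e x y -> (x \in internal_vertices e) || (y \in internal_vertices e).
  move=> exy; apply/negPn/negP; rewrite negb_or => /andP [xI yI].
  by case/set2P: (leaf_edge_spans sym conn exy xI yI c) => Ec;
    [move: xI | move: yI]; rewrite -Ec cI'.
case: (boolP [forall d in internal_vertices e, d == c]).
  move/forall_inP => onlyc; apply: (@nc_star_vd _ _ c) => //.
  by move=> x y /meetI /orP [] /onlyc ->; rewrite ?orbT.
case/forall_inPn => d dI dc.
have Icd : internal_vertices e = [set c; d].
  by apply: card_le2_pair; rewrite // eq_sym.
apply: (@nc_double_star_vd _ _ c d) => //.
- by apply: internal_pair_adjacent; rewrite // eq_sym.
- by move=> x y /meetI; rewrite Icd !inE => /orP [] /orP [] ->; rewrite ?orbT.
Qed.

Theorem theorem4p5 (T : finType) (e : rel T) :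
  simple_graph e -> is_forest e -> 0 < #|T| -> no_isolated e ->
  (vertex_decomposable (non_cover_complex e) <->
   connected_graph e /\ #|internal_vertices e| <= 2).
Proof.
move=> sg forest T0 noiso; split; first exact: nc_vd_necessary.
by case=> conn cI; apply: nc_vd_sufficient.
Qed.
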